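(* There exist absolute constants $c>0$ and $\rho>0$ such that for every even $k\ge2$ and every $p\in\Delta([k]\times[k])$ with marginals $p_1,p_2$, if $S_1,S_2$ are independent uniformly random subsets of $[k]$ of cardinality $k/2$, then $$\Pr\Big[\big|p(S_1\times S_2)-p_1(S_1)p_2(S_2)\big|\ge c\,\frac{d_{TV}(p,p_1\otimes p_2)}{k}\Big]\ge\rho .$$
   Context: $\Delta([k]\times[k])$ is the set of probability distributions on $[k]\times[k]$; $p_1(x)=\sum_y p(x,y)$, $p_2(y)=\sum_x p(x,y)$; $(p_1\otimes p_2)(x,y)=p_1(x)p_2(y)$; $d_{TV}(p,q)=\frac12\|p-q\|_1$; for a set $A$, $p(A)=\sum_{a\in A}p(a)$. *)

From HB Require Import structures.
From mathcomp Require Import all_boot all_order all_algebra.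
Set Implicit Arguments. Unset Strict Implicit. Unset Printing Implicit Defensive.
Import Order.TTheory GRing.Theory Num.Theory.
Local Open Scope ring_scope.

Definition is_dist (R : realFieldType) (k : nat) (p : {ffun 'I_k * 'I_k -> R}) : Prop :=
  (forall a, 0 <= p a) /\ \sum_a p a = 1.

Definition marg1 (R : realFieldType) (k : nat) (p : {ffun 'I_k * 'I_k -> R}) (x : 'I_k) : R :=
  \sum_(y : 'I_k) p (x, y).
Definition marg2 (R : realFieldType) (k : nat) (p : {ffun 'I_k * 'I_k -> R}) (y : 'I_k) : R :=
  \sum_(x : 'I_k) p (x, y).

Definition prod_dist (R : realFieldType) (k : nat) (p : {ffun 'I_k * 'I_k -> R}) (a : 'I_k * 'I_k) : R :=
  marg1 p a.1 * marg2 p a.2.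

Definition dTV (R : realFieldType) (k : nat) (p q : 'I_k * 'I_k -> R) : R :=
  2^-1 * \sum_a `|p a - q a|.

Definition mass (R : realFieldType) (T : finType) (f : T -> R) (A : {set T}) : R :=
  \sum_(a in A) f a.

Definition half_subsets (k : nat) : {set {set 'I_k}} :=
  [set S : {set 'I_k} | #|S| == k./2].

Definition prob_half_pair (R : realFieldType) (k : nat)
    (E : {set 'I_k} -> {set 'I_k} -> bool) : R :=
  (#|[set S : {set 'I_k} * {set 'I_k} |
       [&& S.1 \in half_subsets k, S.2 \in half_subsets k & E S.1 S.2]]|)%:R
  / ((#|half_subsets k| ^ 2)%N)%:R.

From HB Require Import structures.
From mathcomp Require Import all_boot all_order all_algebra all_fingroup.
From mathcomp Require Import ring lra zify.
Import Order.TTheory GRing.Theory Num.Theory.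
Local Open Scope ring_scope.
Set Implicit Arguments. Unset Strict Implicit. Unset Printing Implicit Defensive.

(* Let q := p - p1 (x) p2 and X(S1, S2) := sum of q over S1 x S2; the rows and
   columns of q sum to zero, and d_TV <= k |q|_2 / 2 by Cauchy-Schwarz.
   Second moment: E[X^2] >= |q|_2^2 / 16.  The number of half sets containing
   both x and x' has the form al + be [x = x'] with be >= #|H| / 4, and the zero
   row and column sums kill the al part.
   Fourth moment: E[X^4] <= 9/16 |q|_2^4.  A uniform half set is the image under
   a uniform permutation of a set choosing one point, by a uniform sign, in each
   of n fixed pairs; for fixed permutations X is a quarter of a bilinear form in
   two independent sign vectors, whose fourth moment is at most 9 times its
   squared second moment.
   Paley-Zygmund then gives P[X^2 >= |q|_2^2 / 64] >= 1/256, so c = 1/4 and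
   rho = 1/256 work. *)

Section Sums.
Variable R : realFieldType.

Lemma cauchy_schwarz (I : finType) (P : pred I) (f g : I -> R) :
  (\sum_(i | P i) f i * g i) ^+ 2 <=
  (\sum_(i | P i) f i ^+ 2) * (\sum_(i | P i) g i ^+ 2).
Proof.
have lagrange : \sum_(i | P i) \sum_(j | P j) (f i * g j - f j * g i) ^+ 2 =
   \sum_(i | P i) \sum_(j | P j) (f i ^+ 2 * g j ^+ 2)
 + \sum_(i | P i) \sum_(j | P j) (g i ^+ 2 * f j ^+ 2)
 - 2 * \sum_(i | P i) \sum_(j | P j) ((f i * g i) * (f j * g j)).
  rewrite -big_split mulr_sumr -sumrB /=; apply: eq_bigr => i _.
  rewrite -big_split mulr_sumr -sumrB /=; apply: eq_bigr => j _; ring.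
have : 0 <= \sum_(i | P i) \sum_(j | P j) (f i * g j - f j * g i) ^+ 2.
  by apply: sumr_ge0 => i _; apply: sumr_ge0 => j _; apply: sqr_ge0.
rewrite lagrange -!big_distrlr /= expr2; lra.
Qed.

Lemma sqr_sum_norm_le (I : finType) (f : I -> R) :
  (\sum_i `|f i|) ^+ 2 <= #|I|%:R * \sum_i f i ^+ 2.
Proof.
have := cauchy_schwarz predT (fun i => `|f i|) (fun _ => 1).
have -> : \sum_i `|f i| * 1 = \sum_i `|f i| by apply: eq_bigr => i _; rewrite mulr1.
have -> : \sum_i `|f i| ^+ 2 = \sum_i f i ^+ 2.
  by apply: eq_bigr => i _; rewrite real_normK ?num_real.
by rewrite expr1n sumr_const mulrC.
Qed.

Lemma sqr_sum (I : finType) (P : pred I) (x : I -> R) :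
  (\sum_(i | P i) x i) ^+ 2 = \sum_(a | P a) \sum_(b | P b) x a * x b.
Proof. by rewrite expr2 big_distrlr. Qed.

Lemma sum_mul_delta (I : finType) (c : I) (F : I -> R) (x : R) :
  \sum_d F d * (if c == d then x else 0) = F c * x.
Proof.
rewrite (bigD1 c) //= eqxx big1 ?addr0 // => d nd.
by rewrite eq_sym (negbTE nd) mulr0.
Qed.

Lemma paley_zygmund (I : finType) (A : {set I}) (Z : I -> R) (a : R) :
  (forall i, 0 <= Z i) -> 0 <= a -> #|A|%:R * a <= \sum_(i in A) Z i ->
  (\sum_(i in A) Z i - #|A|%:R * a) ^+ 2 <=
  (\sum_(i in A) Z i ^+ 2) * #|[set i in A | a <= Z i]|%:R.
Proof.
move=> Z_ge0 a_ge0 mean_ge.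
set B := [set i in A | a <= Z i].
have split_mass : \sum_(i in A) Z i <= #|A|%:R * a + \sum_(i in B) Z i * 1.
  have -> : \sum_(i in B) Z i * 1 = \sum_(i in A) (if a <= Z i then Z i else 0).
    rewrite big_mkcond [RHS]big_mkcond; apply: eq_bigr => i _.
    by rewrite inE mulr1; case: (i \in A); case: (a <= Z i).
  rewrite mulr_natl -sumr_const -big_split /=; apply: ler_sum => i _.
  by case: (lerP a (Z i)) => [_|/ltW]; rewrite ?lerDr ?addr0.
have cs := cauchy_schwarz (mem B) Z (fun _ => 1).
rewrite expr1n sumr_const in cs.
have sqr_sub : \sum_(i in B) Z i ^+ 2 <= \sum_(i in A) Z i ^+ 2.
  rewrite [X in _ <= X](bigID (fun i => a <= Z i)) /=.
  have -> : \sum_(i in B) Z i ^+ 2 = \sum_(i in A | a <= Z i) Z i ^+ 2.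
    by apply: eq_bigl => i; rewrite inE.
  by rewrite lerDl sumr_ge0 // => i _; apply: sqr_ge0.
set M := \sum_(i in B) Z i * 1 in split_mass cs.
apply: (le_trans (y := M ^+ 2)).
  by rewrite ler_sqr ?nnegrE; lra.
by apply: le_trans cs _; apply: ler_wpM2r; rewrite ?ler0n.
Qed.

Lemma paley_zygmund_count (I : finType) (A : {set I}) (Z : I -> R) (F : R) :
  (forall i, 0 <= Z i) -> 0 <= F ->
  #|A|%:R * F / 16 <= \sum_(i in A) Z i ->
  \sum_(i in A) Z i ^+ 2 <= 9 / 16 * #|A|%:R * F ^+ 2 ->
  #|A|%:R / 256 <= #|[set i in A | F / 64 <= Z i]|%:R :> R.
Proof.
move=> Z_ge0 F_ge0 moment2 moment4.
set m : R := #|A|%:R; set c : R := #|[set i in A | F / 64 <= Z i]|%:R.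
have m_ge0 : 0 <= m by rewrite ler0n.
have c_ge0 : 0 <= c by rewrite ler0n.
have [F0|F_neq0] := eqVneq F 0.
  have -> : c = m.
    rewrite /c /m; congr (_%:R); apply: eq_card => i.
    by rewrite !inE F0 mul0r Z_ge0 andbT.
  lra.
have F_gt0 : 0 < F by rewrite lt0r F_neq0 F_ge0.
have [m0|m_neq0] := eqVneq m 0; first by rewrite m0 mul0r.
have m_gt0 : 0 < m by rewrite lt0r m_neq0 m_ge0.
have mean_ge : m * (F / 64) <= \sum_(i in A) Z i by nra.
have := paley_zygmund Z_ge0 (divr_ge0 F_ge0 (ler0n _ 64)) mean_ge; rewrite -/m -/c.
set S2 := \sum_(i in A) Z i in moment2 mean_ge *; set S4 := \sum_(i in A) _ in moment4 *.
move=> pz.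
have excess : 3 / 64 * m * F <= S2 - m * (F / 64) by nra.
have excess_ge0 : 0 <= 3 / 64 * m * F by rewrite !mulr_ge0 ?(ltW F_gt0) //; lra.
have bound : (3 / 64 * m * F) ^+ 2 <= 9 / 16 * m * F ^+ 2 * c.
  apply: le_trans (ler_wpM2r c_ge0 moment4); apply: le_trans pz.
  by rewrite ler_sqr ?nnegrE // (le_trans excess_ge0 excess).
have mF_gt0 : 0 < 9 / 16 * m * F ^+ 2 by rewrite !mulr_gt0 ?exprn_gt0 //; lra.
rewrite -(ler_pM2l mF_gt0); apply: le_trans bound.
by rewrite le_eqVlt; apply/orP; left; apply/eqP; field.
Qed.

End Sums.

Section RandomSigns.
Variable R : realFieldType.

Definition sgb (b : bool) : R := if b then 1 else -1.

Lemma sgbK b : sgb b * sgb b = 1.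
Proof. by case: b; rewrite /sgb ?mulrNN mulr1. Qed.

Definition nsigns (I : finType) : R := (#|{ffun I -> bool}|)%:R.

Lemma nsigns_gt0 (I : finType) : 0 < nsigns I.
Proof. by rewrite ltr0n; apply/card_gt0P; exists [ffun => true]. Qed.

Definition flip_at (I : finType) (a : I) (e : {ffun I -> bool}) : {ffun I -> bool} :=
  [ffun t => (t == a) (+) e t].

Lemma flip_atK (I : finType) (a : I) : involutive (flip_at a).
Proof. by move=> e; apply/ffunP => t; rewrite !ffunE addbA addbb. Qed.

Lemma sgb_flip_at (I : finType) (a t : I) e :
  sgb (flip_at a e t) = if t == a then - sgb (e t) else sgb (e t).
Proof. by rewrite ffunE; case: (t == a); case: (e t); rewrite /sgb ?opprK. Qed.

Lemma sum_flip_at_odd (I : finType) (a : I) (F : {ffun I -> bool} -> R) :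
  (forall e, F (flip_at a e) = - F e) -> \sum_e F e = 0.
Proof.
move=> Fodd.
have : \sum_e F e = \sum_e F (flip_at a e).
  by rewrite (reindex_inj (inv_inj (@flip_atK I a))).
under [in X in _ = X -> _]eq_bigr do rewrite Fodd.
rewrite sumrN => h; lra.
Qed.

Lemma sum_sgb2 (I : finType) (a b : I) :
  \sum_(e : {ffun I -> bool}) sgb (e a) * sgb (e b) = if a == b then nsigns I else 0.
Proof.
case: eqP => [->|nab].
  by under eq_bigr do rewrite sgbK; rewrite sumr_const.
apply: (@sum_flip_at_odd _ a) => e; rewrite !sgb_flip_at eqxx.
have /negbTE -> : b != a by apply/eqP => ba; apply: nab.
by rewrite mulNr.
Qed.

(* The nonzero fourth moments of independent signs come from the pairings of
   {a, b, c, d}; the nested tests count a pairing only once when indices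
   coincide. *)
Definition pairing4 (I : eqType) (a b c d : I) : R :=
  if a == b then (if c == d then 1 else 0)
  else if a == c then (if b == d then 1 else 0)
  else if a == d then (if b == c then 1 else 0) else 0.

Lemma sum_sgb4 (I : finType) (a b c d : I) :
  \sum_(e : {ffun I -> bool}) sgb (e a) * sgb (e b) * sgb (e c) * sgb (e d)
  = nsigns I * pairing4 a b c d.
Proof.
have sgb_cancel x y z (e : {ffun I -> bool}) :
    sgb (e x) * sgb (e y) * sgb (e x) * sgb (e z) = sgb (e y) * sgb (e z).
  by rewrite -[RHS]mul1r -(sgbK (e x)); ring.
rewrite /pairing4; case: eqP => [<-|nab].
  under eq_bigr do rewrite sgbK mul1r.
  by rewrite sum_sgb2; case: (c == d); rewrite ?mulr1 ?mulr0.
case: eqP => [<-|nac].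
  under eq_bigr do rewrite sgb_cancel.
  by rewrite sum_sgb2; case: (b == d); rewrite ?mulr1 ?mulr0.
case: eqP => [<-|nad].
  rewrite (eq_bigr (fun e : {ffun I -> bool} => sgb (e b) * sgb (e c))); last first.
    by move=> e _; rewrite -(sgb_cancel a b c e); ring.
  by rewrite sum_sgb2; case: (b == c); rewrite ?mulr1 ?mulr0.
rewrite mulr0; apply: (@sum_flip_at_odd _ a) => e; rewrite !sgb_flip_at eqxx.
have /negbTE -> : b != a by apply/eqP => ba; apply: nab.
have /negbTE -> : c != a by apply/eqP => ca; apply: nac.
have /negbTE -> : d != a by apply/eqP => da; apply: nad.
by rewrite !mulNr.
Qed.

Lemma sum_pairing4 (I : finType) (G : I -> I -> R) (a b : I) :
  \sum_c \sum_d G c d * pairing4 a b c d =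
  if a == b then \sum_c G c c else G a b + G b a.
Proof.
rewrite /pairing4; case: (eqVneq a b) => [_ | nab].
  by apply: eq_bigr => c _; rewrite sum_mul_delta mulr1.
rewrite (bigD1 a) //= eqxx sum_mul_delta mulr1 (bigD1 b) /=; last by rewrite eq_sym.
rewrite (negbTE nab) eqxx sum_mul_delta mulr1 big1 ?addr0 // => c /andP [nca ncb].
rewrite (eq_sym a c) (negbTE nca) (eq_sym b c) (negbTE ncb).
by apply: big1 => d _; rewrite if_same mulr0.
Qed.

Lemma sgb_vector_moment4 (I J : finType) (W : I -> J -> R) :
  \sum_(e : {ffun I -> bool}) (\sum_j (\sum_i sgb (e i) * W i j) ^+ 2) ^+ 2
  <= 3 * nsigns I * (\sum_i \sum_j W i j ^+ 2) ^+ 2.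
Proof.
pose G a b := \sum_j W a j * W b j.
have Gsym a b : G b a = G a b by apply: eq_bigr => j _; rewrite mulrC.
have Gnorm a : G a a = \sum_j W a j ^+ 2 by apply: eq_bigr => j _; rewrite expr2.
have Gdiag_ge0 a : 0 <= G a a by rewrite Gnorm; apply: sumr_ge0 => j _; apply: sqr_ge0.
have Gcs a b : G a b ^+ 2 <= G a a * G b b by rewrite !Gnorm; apply: cauchy_schwarz.
have norm2E (e : {ffun I -> bool}) : \sum_j (\sum_i sgb (e i) * W i j) ^+ 2
    = \sum_a \sum_b sgb (e a) * sgb (e b) * G a b.
  under eq_bigr do rewrite sqr_sum.
  rewrite exchange_big; apply: eq_bigr => a _; rewrite exchange_big.
  apply: eq_bigr => b _; rewrite /G mulr_sumr; apply: eq_bigr => j _; ring.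
have moment4E : \sum_(e : {ffun I -> bool}) (\sum_j (\sum_i sgb (e i) * W i j) ^+ 2) ^+ 2
   = nsigns I * \sum_a \sum_b G a b * (if a == b then \sum_c G c c else G a b + G b a).
  transitivity (\sum_(e : {ffun I -> bool}) \sum_a \sum_b \sum_c \sum_d
      G a b * G c d * (sgb (e a) * sgb (e b) * sgb (e c) * sgb (e d))).
    apply: eq_bigr => e _; rewrite norm2E expr2 big_distrlr; apply: eq_bigr => a _.
    under eq_bigr do rewrite big_distrlr.
    rewrite exchange_big; apply: eq_bigr => b _; apply: eq_bigr => c _.
    by apply: eq_bigr => d _ /=; ring.
  rewrite exchange_big mulr_sumr; apply: eq_bigr => a _.
  rewrite exchange_big mulr_sumr; apply: eq_bigr => b _.
  rewrite -sum_pairing4 exchange_big !mulr_sumr; apply: eq_bigr => c _.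
  rewrite exchange_big mulr_sumr mulr_sumr; apply: eq_bigr => d _.
  by rewrite -mulr_sumr sum_sgb4; ring.
have normsE : \sum_i \sum_j W i j ^+ 2 = \sum_a G a a.
  by apply: eq_bigr => a _; rewrite Gnorm.
rewrite moment4E normsE.
set A := \sum_a G a a.
have termwise : \sum_a \sum_b G a b * (if a == b then A else G a b + G b a)
   <= \sum_a \sum_b ((if a == b then G a a * A else 0) + 2 * (G a a * G b b)).
  apply: ler_sum => a _; apply: ler_sum => b _.
  case: (eqVneq a b) => [<-|nab]; first by have := Gdiag_ge0 a; nra.
  by rewrite (Gsym a b) add0r; have := Gcs a b; rewrite expr2; lra.
have totalE : \sum_a \sum_b ((if a == b then G a a * A else 0) + 2 * (G a a * G b b))
    = 3 * A ^+ 2.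
  have diagE a : \sum_b (if a == b then G a a * A else 0) = G a a * A.
    by rewrite -big_mkcond /= (big_pred1 a).
  under eq_bigr do rewrite big_split /= diagE.
  rewrite big_split /= -mulr_suml.
  under [X in _ + X = _]eq_bigr do under eq_bigr do rewrite mulrA.
  by rewrite -big_distrlr /= -mulr_sumr -/A; ring.
rewrite [3 * _]mulrC -mulrA; apply: ler_wpM2l; first exact: ltW (nsigns_gt0 I).
by rewrite -totalE.
Qed.

Lemma sgb_moment4 (J : finType) (y : J -> R) :
  \sum_(f : {ffun J -> bool}) (\sum_j sgb (f j) * y j) ^+ 4
  <= 3 * nsigns J * (\sum_j y j ^+ 2) ^+ 2.
Proof.
have := sgb_vector_moment4 (fun (j : J) (_ : 'I_1) => y j).
under eq_bigr do rewrite big_ord1.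
under [X in _ <= _ * X ^+ 2 -> _]eq_bigr do rewrite big_ord1.
by apply: le_trans; apply: ler_sum => f _; rewrite -exprM.
Qed.

Lemma sgb_chaos_moment4 (I J : finType) (Q : I -> J -> R) :
  \sum_(e : {ffun I -> bool}) \sum_(f : {ffun J -> bool})
     (\sum_i \sum_j sgb (e i) * sgb (f j) * Q i j) ^+ 4
  <= 9 * nsigns I * nsigns J * (\sum_i \sum_j Q i j ^+ 2) ^+ 2.
Proof.
have chaosE (e : {ffun I -> bool}) (f : {ffun J -> bool}) :
   \sum_i \sum_j sgb (e i) * sgb (f j) * Q i j
   = \sum_j sgb (f j) * (\sum_i sgb (e i) * Q i j).
  rewrite exchange_big; apply: eq_bigr => j _.
  by rewrite mulr_sumr; apply: eq_bigr => i _; ring.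
under eq_bigr do under eq_bigr do rewrite chaosE.
apply: (le_trans (y := \sum_(e : {ffun I -> bool}) 3 * nsigns J *
    (\sum_j (\sum_i sgb (e i) * Q i j) ^+ 2) ^+ 2)).
  by apply: ler_sum => e _; apply: sgb_moment4.
rewrite -mulr_sumr.
have NJ_ge0 : 0 <= 3 * nsigns J by rewrite mulr_ge0 // ltW // nsigns_gt0.
apply: le_trans (ler_wpM2l NJ_ge0 (sgb_vector_moment4 Q)) _.
by rewrite le_eqVlt; apply/orP; left; apply/eqP; ring.
Qed.

Definition contrast (I J : finType) (u : I -> bool -> J -> bool -> R) i j :=
  \sum_b \sum_b' sgb b * sgb b' * u i b j b'.

(* Expanding u i b j b' in the basis 1, sgb b, sgb b', sgb b * sgb b' of
   functions of (b, b'): the zero marginals kill every term but the last. *)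
Lemma sum_select_contrast (I J : finType) (u : I -> bool -> J -> bool -> R)
  (u_row : forall i b, \sum_j \sum_b' u i b j b' = 0)
  (u_col : forall j b', \sum_i \sum_b u i b j b' = 0)
  (e : {ffun I -> bool}) (f : {ffun J -> bool}) :
  \sum_i \sum_j u i (e i) j (f j) =
  4^-1 * \sum_i \sum_j sgb (e i) * sgb (f j) * contrast u i j.
Proof.
pose A i j := \sum_b \sum_b' u i b j b'.
pose B i j := \sum_b \sum_b' sgb b * u i b j b'.
pose C i j := \sum_b \sum_b' sgb b' * u i b j b'.
have expand i j : u i (e i) j (f j) = 4^-1 * (A i j + sgb (e i) * B i j
      + sgb (f j) * C i j + sgb (e i) * sgb (f j) * contrast u i j).
  rewrite /A /B /C /contrast !big_bool /=.
  by case: (e i); case: (f j); rewrite /sgb /=; field.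
transitivity (\sum_i \sum_j 4^-1 * A i j + \sum_i \sum_j 4^-1 * (sgb (e i) * B i j)
  + \sum_i \sum_j 4^-1 * (sgb (f j) * C i j)
  + \sum_i \sum_j 4^-1 * (sgb (e i) * sgb (f j) * contrast u i j)).
  rewrite -!big_split; apply: eq_bigr => i _; rewrite -!big_split.
  by apply: eq_bigr => j _; rewrite expand /=; ring.
have -> : \sum_i \sum_j 4^-1 * A i j = 0.
  apply: big1 => i _.
  by rewrite -mulr_sumr /A exchange_big /= big1 ?mulr0 // => b _; apply: u_row.
have -> : \sum_i \sum_j 4^-1 * (sgb (e i) * B i j) = 0.
  apply: big1 => i _.
  rewrite -mulr_sumr -mulr_sumr /B exchange_big /= big1 ?mulr0 // => b _.
  under eq_bigr do rewrite -mulr_sumr.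
  by rewrite -mulr_sumr u_row mulr0.
have -> : \sum_i \sum_j 4^-1 * (sgb (f j) * C i j) = 0.
  rewrite exchange_big; apply: big1 => j _.
  rewrite -mulr_sumr -mulr_sumr /C exchange_big /=.
  under eq_bigr do rewrite exchange_big /=.
  rewrite exchange_big /= big1 ?mulr0 // => b' _.
  under eq_bigr do rewrite -mulr_sumr.
  by rewrite -mulr_sumr exchange_big /= u_col mulr0.
by rewrite !add0r mulr_sumr; apply: eq_bigr => i _; rewrite mulr_sumr.
Qed.

Lemma contrast_sqr_le (I J : finType) (u : I -> bool -> J -> bool -> R) i j :
  contrast u i j ^+ 2 <= 4 * \sum_b \sum_b' u i b j b' ^+ 2.
Proof.
rewrite /contrast !big_bool /sgb /=.
set a := u i true j true; set b := u i true j false.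
set c := u i false j true; set d := u i false j false.
have := sqr_ge0 (a + b); have := sqr_ge0 (a + c); have := sqr_ge0 (a - d).
have := sqr_ge0 (b - c); have := sqr_ge0 (b + d); have := sqr_ge0 (c + d).
rewrite !expr2; nra.
Qed.

End RandomSigns.

Section PermSets.
Variable T : finType.

Definition transfer (A B : {set T}) (x : T) := nth x (enum B) (index x (enum A)).

Lemma transfer_in (A B : {set T}) x : #|A| = #|B| -> x \in A -> transfer A B x \in B.
Proof.
move=> eqAB xA; rewrite -mem_enum /transfer; apply: mem_nth.
by rewrite -cardE -eqAB cardE index_mem mem_enum.
Qed.

Lemma transfer_inj (A B : {set T}) x y : #|A| = #|B| -> x \in A -> y \in A ->
  transfer A B x = transfer A B y -> x = y.
Proof.
move=> eqAB xA yA.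
have ltB z : z \in A -> (index z (enum A) < size (enum B))%N.
  by move=> zA; rewrite -cardE -eqAB cardE index_mem mem_enum.
rewrite /transfer (set_nth_default y x (ltB x xA)) => /eqP.
rewrite nth_uniq ?enum_uniq ?ltB // => /eqP eq_index.
by rewrite -(nth_index x (s := enum A) (x := x)) ?mem_enum // eq_index nth_index ?mem_enum.
Qed.

Lemma perm_imset_eq (A B : {set T}) : #|A| = #|B| -> exists s : {perm T}, s @: A = B.
Proof.
move=> eqAB.
have eqCAB : #|~: A| = #|~: B| by have := cardsC A; have := cardsC B; lia.
pose f x := if x \in A then transfer A B x else transfer (~: A) (~: B) x.
have notB x : x \notin A -> transfer (~: A) (~: B) x \notin B.
  by move=> xA; have := transfer_in eqCAB (x := x); rewrite !inE; apply.
have f_inj : injective f.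
  move=> x y; rewrite /f.
  case xA: (x \in A); case yA: (y \in A).
  - exact: transfer_inj.
  - by move=> eq_f; have := notB y (negbT yA); rewrite -eq_f transfer_in.
  - by move=> eq_f; have := notB x (negbT xA); rewrite eq_f transfer_in.
  - by apply: transfer_inj; rewrite // inE ?xA ?yA.
exists (perm f_inj); apply/eqP.
rewrite eqEcard card_imset ?eqAB ?leqnn ?andbT; last exact: perm_inj.
apply/subsetP => _ /imsetP [x xA ->]; rewrite permE /f xA; exact: transfer_in.
Qed.

Lemma sum_perm_imset (R : nmodType) (n : nat) (G : {set T} -> R) (A : {set T}) :
  #|A| = n ->
  (\sum_(s : {perm T}) G (s @: A)) *+ #|[set S : {set T} | #|S| == n]|
  = (\sum_(S in [set S : {set T} | #|S| == n]) G S) *+ #|{perm T}|.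
Proof.
move=> cardA; set H := [set S : {set T} | #|S| == n].
have imset_H (s : {perm T}) (S : {set T}) : (s @: S \in H) = (S \in H).
  by rewrite !inE card_imset //; apply: perm_inj.
have sum_H (s : {perm T}) : \sum_(S in H) G (s @: S) = \sum_(S in H) G S.
  rewrite [RHS](reindex_inj (imset_inj (@perm_inj _ s))) /=.
  by apply: eq_bigl => S; rewrite imset_H.
have sum_perm S : S \in H -> \sum_(s : {perm T}) G (s @: S) = \sum_(s : {perm T}) G (s @: A).
  rewrite inE => /eqP cardS.
  have [t <-] : exists t : {perm T}, t @: A = S by apply: perm_imset_eq; rewrite cardS.
  transitivity (\sum_(s : {perm T}) G ((t * s)%g @: A)).
    apply: eq_bigr => s _; congr G; rewrite -imset_comp; apply: eq_imset => x.
    by rewrite /= permM.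
  by rewrite [RHS](reindex_inj (mulgI t)).
transitivity (\sum_(S in H) \sum_(s : {perm T}) G (s @: S)).
  by rewrite (eq_bigr _ sum_perm) sumr_const.
by rewrite exchange_big /= (eq_bigr _ (fun s _ => sum_H s)) sumr_const.
Qed.

Lemma sum_perm2_imset (R : nmodType) (n : nat) (G : {set T} -> {set T} -> R)
    (A B : {set T}) : #|A| = n -> #|B| = n ->
  (\sum_(s : {perm T}) \sum_(t : {perm T}) G (s @: A) (t @: B))
    *+ #|[set S : {set T} | #|S| == n]| *+ #|[set S : {set T} | #|S| == n]|
  = (\sum_(S in [set S : {set T} | #|S| == n]) \sum_(S' in [set S : {set T} | #|S| == n])
      G S S') *+ #|{perm T}| *+ #|{perm T}|.
Proof.
move=> cardA cardB; rewrite -sumrMnl.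
under eq_bigr do rewrite (sum_perm_imset _ cardB).
by rewrite sumrMnl mulrnAC (sum_perm_imset (fun S => \sum_(S' in _) G S S') cardA).
Qed.

End PermSets.

Section HalfSubsets.
Variables (R : realFieldType) (T : finType) (n : nat).
Hypothesis cardT : #|T| = (n + n)%N.
Local Notation H := [set S : {set T} | #|S| == n].

Definition ind (S : {set T}) x : R := (x \in S)%:R.

Lemma indK S x : ind S x * ind S x = ind S x.
Proof. by rewrite /ind; case: (x \in S); rewrite ?mulr1 ?mulr0. Qed.

Lemma sum_ind S : \sum_x ind S x = #|S|%:R.
Proof.
rewrite /ind -sum1_card natr_sum [RHS]big_mkcond.
by apply: eq_bigr => x _; case: (x \in S).
Qed.

Lemma sum_in_ind (S : {set T}) (F : T -> R) : \sum_(x in S) F x = \sum_x ind S x * F x.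
Proof.
rewrite big_mkcond; apply: eq_bigr => x _; rewrite /ind.
by case: (x \in S); rewrite ?mul1r ?mul0r.
Qed.

Definition comember x x' : R := \sum_(S in H) ind S x * ind S x'.

Lemma comember_perm (s : {perm T}) x x' : comember (s x) (s x') = comember x x'.
Proof.
rewrite /comember [LHS](reindex_inj (imset_inj (@perm_inj _ s))) /=.
apply: eq_big => [S|S _]; first by rewrite !inE card_imset //; apply: perm_inj.
by rewrite /ind !mem_imset //; apply: perm_inj.
Qed.

Lemma comemberC x x' : comember x x' = comember x' x.
Proof. by apply: eq_bigr => S _; rewrite mulrC. Qed.

Lemma comember_diag x y : comember x x = comember y y.
Proof.
have [s] : exists s : {perm T}, s @: [set x] = [set y].
  by apply: perm_imset_eq; rewrite !cards1.
by rewrite imset_set1 => /set1_inj <-; rewrite comember_perm.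
Qed.

Lemma comember_offdiag x x' y y' : x != x' -> y != y' -> comember x x' = comember y y'.
Proof.
move=> nxx' nyy'.
have [s s_xx'] : exists s : {perm T}, s @: [set x; x'] = [set y; y'].
  by apply: perm_imset_eq; rewrite !cards2 nxx' nyy'.
rewrite imsetU1 imset_set1 in s_xx'.
have sx : s x \in [set y; y'] by rewrite -s_xx' !inE eqxx.
have sx' : s x' \in [set y; y'] by rewrite -s_xx' !inE eqxx orbT.
have nsx : s x != s x' by rewrite (inj_eq (@perm_inj _ s)).
rewrite -(comember_perm s); move: sx sx' nsx; rewrite !inE.
by case/orP => /eqP ->; case/orP => /eqP ->; rewrite ?eqxx // comemberC.
Qed.

Lemma sum_comember_diag : \sum_x comember x x = n%:R * #|H|%:R.
Proof.
rewrite /comember exchange_big /= (eq_bigr (fun _ => n%:R)).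
  by rewrite sumr_const mulr_natr.
by move=> S; rewrite inE => /eqP cardS; under eq_bigr do rewrite indK; rewrite sum_ind cardS.
Qed.

Lemma sum_comember_row x : \sum_x' comember x x' = n%:R * comember x x.
Proof.
rewrite /comember exchange_big /= mulr_sumr; apply: eq_bigr => S; rewrite inE => /eqP cardS.
by rewrite -mulr_sumr sum_ind cardS indK mulrC.
Qed.

(* By double transitivity, comember x x' = al + be [x == x'], and counting the
   pairs (x, S) with x in S in two ways gives be = #|H| n / (2 (2n - 1)). *)
Lemma comember_decomp : (0 < n)%N -> exists al be : R,
  (forall x x', comember x x' = al + (if x == x' then be else 0)) /\ #|H|%:R / 4 <= be.
Proof.
move=> n_gt0.
have : (0 < #|T|)%N by rewrite cardT; lia.
case/card_gt0P => x0 _.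
have : (0 < #|[set~ x0]|)%N by rewrite cardsC1 cardT; lia.
case/card_gt0P => x1; rewrite !inE => nx1x0.
set al := comember x0 x1; set ga := comember x0 x0.
have decomp x x' : comember x x' = al + (if x == x' then ga - al else 0).
  case: eqVneq => [->|nxx']; first by rewrite (comember_diag x' x0) addrC subrK.
  by rewrite addr0; apply: comember_offdiag => //; rewrite eq_sym.
exists al, (ga - al); split => //.
have diagE : (n + n)%:R * ga = n%:R * #|H|%:R.
  rewrite -sum_comember_diag (eq_bigr (fun _ => ga)) => [|x _]; last exact: comember_diag.
  by rewrite sumr_const -cardT mulr_natl.
have rowE : (n + n)%:R * al + (ga - al) = n%:R * ga.
  rewrite -sum_comember_row (eq_bigr _ (fun x' _ => decomp x0 x')) big_split /=.
  by rewrite sumr_const -cardT mulr_natl -big_mkcond (big_pred1 x0).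
have ga_ge0 : 0 <= ga by apply: sumr_ge0 => S _; rewrite indK /ind ler0n.
have n_ge1 : 1 <= n%:R :> R by rewrite ler1n.
rewrite natrD in diagE rowE.
set h := #|H|%:R in diagE *; set N := n%:R in diagE rowE n_ge1 *.
have ga_half : 2 * ga = h.
  have N_neq0 : N != 0 by apply/negP => /eqP N0; rewrite N0 in n_ge1; lra.
  by apply: (mulfI N_neq0); rewrite -diagE; ring.
nra.
Qed.

Lemma sum_sqr_rect_sum (q : T -> T -> R) :
  \sum_(S in H) \sum_(S' in H) (\sum_(x in S) \sum_(y in S') q x y) ^+ 2 =
  \sum_x \sum_x' \sum_y \sum_y' comember x x' * comember y y' * (q x y * q x' y').
Proof.
have sqrE (S S' : {set T}) : (\sum_(x in S) \sum_(y in S') q x y) ^+ 2 =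
   \sum_x \sum_x' \sum_y \sum_y'
     (ind S x * ind S x') * (ind S' y * ind S' y') * (q x y * q x' y').
  rewrite sum_in_ind sqr_sum; apply: eq_bigr => x _; apply: eq_bigr => x' _.
  rewrite !sum_in_ind.
  transitivity (ind S x * ind S x' *
    ((\sum_y ind S' y * q x y) * (\sum_y' ind S' y' * q x' y'))); first ring.
  rewrite big_distrlr mulr_sumr; apply: eq_bigr => y _.
  by rewrite mulr_sumr; apply: eq_bigr => y' _ /=; ring.
have sum4_exchange (F : {set T} -> T -> T -> T -> T -> R) :
    \sum_(S in H) \sum_x \sum_x' \sum_y \sum_y' F S x x' y y' =
    \sum_x \sum_x' \sum_y \sum_y' \sum_(S in H) F S x x' y y'.
  rewrite exchange_big; apply: eq_bigr => x _; rewrite exchange_big.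
  apply: eq_bigr => x' _; rewrite exchange_big; apply: eq_bigr => y _.
  exact: exchange_big.
under eq_bigr do under eq_bigr do rewrite sqrE.
under eq_bigr do rewrite sum4_exchange.
rewrite sum4_exchange; apply: eq_bigr => x _; apply: eq_bigr => x' _.
apply: eq_bigr => y _; apply: eq_bigr => y' _.
rewrite /comember mulr_suml mulr_suml; apply: eq_bigr => S _.
by rewrite mulr_sumr mulr_suml; apply: eq_bigr => S' _; ring.
Qed.

Lemma rect_sum_second_moment (q : T -> T -> R) : (0 < n)%N ->
  (forall x, \sum_y q x y = 0) -> (forall y, \sum_x q x y = 0) ->
  (#|H|%:R / 4) ^+ 2 * (\sum_x \sum_y q x y ^+ 2) <=
  \sum_(S in H) \sum_(S' in H) (\sum_(x in S) \sum_(y in S') q x y) ^+ 2.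
Proof.
move=> n_gt0 q_row q_col.
have [al [be [comemberE be_ge]]] := comember_decomp n_gt0.
have colE x y' : \sum_x' comember x x' * q x' y' = be * q x y'.
  under eq_bigr do rewrite comemberE mulrDl.
  rewrite big_split /= -mulr_sumr q_col mulr0 add0r.
  by under eq_bigr do rewrite mulrC; rewrite sum_mul_delta mulrC.
have rowE x y : \sum_y' comember y y' * (be * q x y') = be * (be * q x y).
  under eq_bigr do rewrite comemberE mulrDl.
  rewrite big_split /= -mulr_sumr -mulr_sumr q_row !mulr0 add0r.
  by under eq_bigr do rewrite mulrC; rewrite sum_mul_delta mulrC.
have comember_sumE : \sum_x \sum_x' \sum_y \sum_y' comember x x' * comember y y' * (q x y * q x' y')
   = be ^+ 2 * \sum_x \sum_y q x y ^+ 2.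
  rewrite mulr_sumr; apply: eq_bigr => x _.
  rewrite exchange_big mulr_sumr; apply: eq_bigr => y _.
  rewrite exchange_big /=.
  transitivity (\sum_y' comember y y' * (\sum_x' comember x x' * q x' y') * q x y).
    apply: eq_bigr => y' _; rewrite mulr_sumr mulr_suml; apply: eq_bigr => x' _; ring.
  by under eq_bigr do rewrite colE; rewrite -mulr_suml rowE; ring.
rewrite sum_sqr_rect_sum comember_sumE; apply: ler_wpM2r.
  by apply: sumr_ge0 => x _; apply: sumr_ge0 => y _; apply: sqr_ge0.
have h4_ge0 : 0 <= #|H|%:R / 4 :> R by rewrite divr_ge0 ?ler0n.
by rewrite ler_sqr ?nnegrE // (le_trans h4_ge0 be_ge).
Qed.

Lemma card_label_dom : #|{: 'I_n * bool}| = #|T|.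
Proof. by rewrite card_prod card_ord card_bool cardT muln2 addnn. Qed.

(* Split T into the n twin pairs {label (i, false), label (i, true)}. *)
Definition label (u : 'I_n * bool) : T :=
  enum_val (cast_ord card_label_dom (enum_rank u)).

Lemma label_inj : injective label.
Proof. by move=> u v /enum_val_inj /cast_ord_inj /enum_rank_inj. Qed.

Lemma sum_label (F : T -> R) : \sum_i \sum_b F (label (i, b)) = \sum_x F x.
Proof.
have label_onto : label @: [set: 'I_n * bool] = [set: T].
  apply/eqP; rewrite eqEcard subsetT card_imset; last exact: label_inj.
  by rewrite !cardsT /= card_label_dom.
have -> : \sum_x F x = \sum_(x in label @: [set: 'I_n * bool]) F x.
  by apply: eq_bigl => x; rewrite label_onto inE.
rewrite pair_big big_imset /=; last exact: in2W label_inj.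
by apply: eq_big => [u | [i b] _]; rewrite ?inE.
Qed.

Definition select (e : {ffun 'I_n -> bool}) : {set T} := [set label (i, e i) | i : 'I_n].

Lemma card_select e : #|select e| = n.
Proof. by rewrite card_imset ?card_ord // => i j /label_inj []. Qed.

Lemma half_subsets_gt0 : (0 < #|H|)%N.
Proof. by apply/card_gt0P; exists (select [ffun => false]); rewrite inE card_select. Qed.

Lemma sum_perm_select (s : {perm T}) e (F : T -> R) :
  \sum_(x in s @: select e) F x = \sum_i F (s (label (i, e i))).
Proof.
rewrite -imset_comp big_imset /=; first by apply: eq_bigl => i; rewrite inE.
by move=> i j _ _ /perm_inj /label_inj [].
Qed.

(* Relabelling by s and t, the rectangle sum over a pair of selections is a
   quarter of a bilinear form in the sign vectors e, f. *)
Lemma rect_sum_moment4_select (s t : {perm T}) (q : T -> T -> R) :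
  (forall x, \sum_y q x y = 0) -> (forall y, \sum_x q x y = 0) ->
  \sum_(e : {ffun 'I_n -> bool}) \sum_(f : {ffun 'I_n -> bool})
    (\sum_(x in s @: select e) \sum_(y in t @: select f) q x y) ^+ 4
  <= 9 / 16 * nsigns R 'I_n * nsigns R 'I_n * (\sum_x \sum_y q x y ^+ 2) ^+ 2.
Proof.
move=> q_row q_col.
pose u i b j b' := q (s (label (i, b))) (t (label (j, b'))).
have sum_perm_label (r : {perm T}) (F : T -> R) :
    \sum_i \sum_b F (r (label (i, b))) = \sum_x F x.
  by rewrite (sum_label (F \o r)) [RHS](reindex_inj (@perm_inj _ r)).
have u_row i b : \sum_j \sum_b' u i b j b' = 0 by rewrite sum_perm_label q_row.
have u_col j b' : \sum_i \sum_b u i b j b' = 0.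
  by rewrite (sum_perm_label s (fun x => q x _)) q_col.
have rectE e f : \sum_(x in s @: select e) \sum_(y in t @: select f) q x y =
    4^-1 * \sum_i \sum_j sgb R (e i) * sgb R (f j) * contrast u i j.
  rewrite -sum_select_contrast // sum_perm_select.
  by apply: eq_bigr => i _; rewrite sum_perm_select.
have u_normE : \sum_i \sum_j \sum_b \sum_b' u i b j b' ^+ 2 = \sum_x \sum_y q x y ^+ 2.
  transitivity (\sum_i \sum_b \sum_j \sum_b' u i b j b' ^+ 2).
    by apply: eq_bigr => i _; rewrite exchange_big.
  rewrite -(sum_perm_label s (fun x => \sum_y q x y ^+ 2)).
  apply: eq_bigr => i _; apply: eq_bigr => b _.
  exact: (sum_perm_label t (fun y => q _ y ^+ 2)).
set F := \sum_x \sum_y q x y ^+ 2 in u_normE *.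
have contrast_norm_ge0 : 0 <= \sum_i \sum_j contrast u i j ^+ 2.
  by apply: sumr_ge0 => i _; apply: sumr_ge0 => j _; apply: sqr_ge0.
have contrast_norm_le : \sum_i \sum_j contrast u i j ^+ 2 <= 4 * F.
  rewrite -u_normE mulr_sumr; apply: ler_sum => i _; rewrite mulr_sumr.
  by apply: ler_sum => j _; apply: contrast_sqr_le.
under eq_bigr do under eq_bigr do rewrite rectE exprMn.
under eq_bigr do rewrite -mulr_sumr.
rewrite -mulr_sumr.
have N_ge0 : 0 <= nsigns R 'I_n by apply: ltW; apply: nsigns_gt0.
apply: le_trans (ler_wpM2l _ (sgb_chaos_moment4 (contrast u))) _.
  by rewrite exprn_ge0 // invr_ge0.
apply: le_trans (ler_wpM2l _ (ler_wpM2l _ (lerXn2r 2 _ _ contrast_norm_le))) _.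
- by rewrite exprn_ge0 // invr_ge0.
- by rewrite !mulr_ge0.
- by rewrite nnegrE.
- by rewrite nnegrE (le_trans contrast_norm_ge0 contrast_norm_le).
by rewrite le_eqVlt; apply/orP; left; apply/eqP; field.
Qed.

Lemma rect_sum_fourth_moment (q : T -> T -> R) :
  (forall x, \sum_y q x y = 0) -> (forall y, \sum_x q x y = 0) ->
  \sum_(S in H) \sum_(S' in H) (\sum_(x in S) \sum_(y in S') q x y) ^+ 4
  <= 9 / 16 * #|H|%:R ^+ 2 * (\sum_x \sum_y q x y ^+ 2) ^+ 2.
Proof.
move=> q_row q_col.
pose G (S S' : {set T}) := (\sum_(x in S) \sum_(y in S') q x y) ^+ 4.
pose V e f := \sum_(s : {perm T}) \sum_(t : {perm T}) G (s @: select e) (t @: select f).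
set W := \sum_(S in H) \sum_(S' in H) _.
set F := \sum_x \sum_y q x y ^+ 2.
set h : R := #|H|%:R; set P : R := #|{perm T}|%:R; set N := nsigns R 'I_n.
have avgE e f : V e f * (h * h) = W * (P * P).
  by rewrite !mulrA /h /P !mulr_natr (sum_perm2_imset G (card_select e) (card_select f)).
have sum_avgE : (\sum_e \sum_f V e f) * (h * h) = W * (P * P) * N * N.
  rewrite mulr_suml; under eq_bigr do rewrite mulr_suml.
  under eq_bigr do under eq_bigr do rewrite avgE.
  by rewrite !sumr_const /N /nsigns !mulr_natr.
have V_bound : \sum_e \sum_f V e f <= 9 / 16 * N * N * F ^+ 2 * P * P.
  have -> : \sum_e \sum_f V e f = \sum_(s : {perm T}) \sum_(t : {perm T})
      \sum_(e : {ffun 'I_n -> bool}) \sum_(f : {ffun 'I_n -> bool})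
      G (s @: select e) (t @: select f).
    transitivity (\sum_(e : {ffun 'I_n -> bool}) \sum_(s : {perm T})
      \sum_(t : {perm T}) \sum_(f : {ffun 'I_n -> bool}) G (s @: select e) (t @: select f)).
      apply: eq_bigr => e _; rewrite exchange_big; apply: eq_bigr => s _.
      exact: exchange_big.
    by rewrite exchange_big; apply: eq_bigr => s _; rewrite exchange_big.
  set c := 9 / 16 * N * N * F ^+ 2.
  rewrite /P !mulr_natr -!sumr_const; apply: ler_sum => s _; apply: ler_sum => t _.
  exact: rect_sum_moment4_select.
have N_gt0 : 0 < N by apply: nsigns_gt0.
have P_gt0 : 0 < P by rewrite ltr0n; apply/card_gt0P; exists 1%g.
have h_ge0 : 0 <= h by rewrite ler0n.
have := ler_wpM2r (mulr_ge0 h_ge0 h_ge0) V_bound.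
rewrite sum_avgE => bound.
rewrite -(ler_pM2r (mulr_gt0 (mulr_gt0 N_gt0 N_gt0) (mulr_gt0 P_gt0 P_gt0))).
by apply: le_trans (le_trans _ bound) _; rewrite le_eqVlt; apply/orP; left; apply/eqP; ring.
Qed.

Lemma rect_sum_large_count (q : T -> T -> R) : (0 < n)%N ->
  (forall x, \sum_y q x y = 0) -> (forall y, \sum_x q x y = 0) ->
  (#|H|%:R : R) ^+ 2 / 256 <=
  #|[set SS in setX H H |
      (\sum_x \sum_y q x y ^+ 2) / 64 <= (\sum_(x in SS.1) \sum_(y in SS.2) q x y) ^+ 2]|%:R.
Proof.
move=> n_gt0 q_row q_col.
have pair_sumE (G : {set T} -> {set T} -> R) :
   \sum_(SS in setX H H) G SS.1 SS.2 = \sum_(S in H) \sum_(S' in H) G S S'.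
  by rewrite pair_big_dep /=; apply: eq_bigl => -[S S']; rewrite !inE.
have card_HH : #|setX H H|%:R = #|H|%:R ^+ 2 :> R by rewrite cardsX natrM expr2.
rewrite -card_HH; apply: paley_zygmund_count => [SS | | |].
- exact: sqr_ge0.
- by apply: sumr_ge0 => x _; apply: sumr_ge0 => y _; apply: sqr_ge0.
- rewrite (pair_sumE (fun S S' => (\sum_(x in S) \sum_(y in S') q x y) ^+ 2)) card_HH.
  apply: le_trans (rect_sum_second_moment n_gt0 q_row q_col).
  by rewrite le_eqVlt; apply/orP; left; apply/eqP; field.
- rewrite (eq_bigr _ (fun SS _ => esym (exprM _ 2 2))) /=.
  rewrite (pair_sumE (fun S S' => (\sum_(x in S) \sum_(y in S') q x y) ^+ 4)) card_HH.
  exact: rect_sum_fourth_moment.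
Qed.

End HalfSubsets.

Section Discrepancy.
Variables (R : realFieldType) (k : nat) (p : {ffun 'I_k * 'I_k -> R}).

Definition centered (x y : 'I_k) : R := p (x, y) - marg1 p x * marg2 p y.

Lemma sum_marg1 : \sum_x marg1 p x = \sum_a p a.
Proof. by rewrite pair_big /=; apply: eq_bigr => -[]. Qed.

Lemma sum_marg2 : \sum_y marg2 p y = \sum_a p a.
Proof. by rewrite /marg2 exchange_big sum_marg1. Qed.

Lemma sum_centered_row : is_dist p -> forall x, \sum_y centered x y = 0.
Proof. by move=> [_ p1] x; rewrite /centered sumrB -mulr_sumr sum_marg2 p1 mulr1 subrr. Qed.

Lemma sum_centered_col : is_dist p -> forall y, \sum_x centered x y = 0.
Proof. by move=> [_ p1] y; rewrite /centered sumrB -mulr_suml sum_marg1 p1 mul1r subrr. Qed.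

Lemma mass_setX_sub_prod (S1 S2 : {set 'I_k}) :
  mass p (setX S1 S2) - mass (marg1 p) S1 * mass (marg2 p) S2 =
  \sum_(x in S1) \sum_(y in S2) centered x y.
Proof.
have -> : mass p (setX S1 S2) = \sum_(x in S1) \sum_(y in S2) p (x, y).
  by rewrite /mass pair_big_dep /=; apply: eq_big => -[x y] //; rewrite inE.
by rewrite /mass big_distrlr /= -sumrB; apply: eq_bigr => x _; rewrite -sumrB.
Qed.

Lemma dTV_prod_sqr_le :
  dTV p (prod_dist p) ^+ 2 <= k%:R ^+ 2 / 4 * \sum_x \sum_y centered x y ^+ 2.
Proof.
have -> : dTV p (prod_dist p) = 2^-1 * \sum_a `|centered a.1 a.2|.
  by rewrite /dTV; congr (_ * _); apply: eq_bigr => -[x y].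
have := sqr_sum_norm_le (fun a : 'I_k * 'I_k => centered a.1 a.2).
rewrite card_prod card_ord natrM -expr2 pair_big /=.
set D := \sum_a _; set F := \sum_a _ => D_le.
have -> : (2^-1 * D) ^+ 2 = k%:R ^+ 2 / 4 * F - (k%:R ^+ 2 * F - D ^+ 2) / 4.
  by field.
by rewrite lerBlDr lerDl divr_ge0 // subr_ge0.
Qed.

Lemma discrepancy_ge_dTV (X : R) : (0 < k)%N ->
  (\sum_x \sum_y centered x y ^+ 2) / 64 <= X ^+ 2 ->
  4^-1 * dTV p (prod_dist p) / k%:R <= `|X|.
Proof.
move=> k_gt0 large.
have k_pos : 0 < k%:R :> R by rewrite ltr0n.
have dTV_ge0 : 0 <= dTV p (prod_dist p).
  by rewrite /dTV mulr_ge0 ?sumr_ge0 // => *; lra.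
rewrite -ler_sqr ?nnegrE ?normr_ge0 //; last first.
  by apply: divr_ge0; [apply: mulr_ge0; rewrite ?invr_ge0 | exact: ltW].
rewrite real_normK ?num_real //.
apply: le_trans large.
have -> : (4^-1 * dTV p (prod_dist p) / k%:R) ^+ 2 =
    dTV p (prod_dist p) ^+ 2 / (16 * k%:R ^+ 2) by field; rewrite gt_eqF.
rewrite ler_pdivrMr ?mulr_gt0 ?exprn_gt0 //; apply: le_trans dTV_prod_sqr_le _.
by rewrite le_eqVlt; apply/orP; left; apply/eqP; field.
Qed.

End Discrepancy.

Theorem corollary6p7 :
  exists (c rho : rat), 0 < c /\ 0 < rho /\
  forall (R : realFieldType) (k : nat), (2 <= k)%N -> ~~ odd k ->
  forall p : {ffun 'I_k * 'I_k -> R}, is_dist p ->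
    ratr rho <=
    prob_half_pair R (fun S1 S2 =>
      ratr c * dTV p (prod_dist p) / k%:R <=
      `| mass p (setX S1 S2) - mass (marg1 p) S1 * mass (marg2 p) S2 |).
Proof.
exists 4^-1, 256^-1; split; first by rewrite invr_gt0.
split; first by rewrite invr_gt0.
move=> R k k_ge2 k_even p p_dist.
set n := k./2.
have cardT : #|'I_k| = (n + n)%N.
  by rewrite card_ord addnn -[LHS]odd_double_half (negbTE k_even).
have n_gt0 : (0 < n)%N by move: cardT; rewrite card_ord; lia.
have := rect_sum_large_count cardT n_gt0 (sum_centered_row p_dist) (sum_centered_col p_dist).
rewrite /prob_half_pair fmorphV /= ratr_nat natrX ler_pdivlMr; last first.
  by rewrite exprn_gt0 // ltr0n half_subsets_gt0.
rewrite mulrC => /le_trans; apply; rewrite ler_nat; apply: subset_leq_card.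
apply/subsetP => -[S1 S2]; rewrite !inE /= => /andP [/andP [-> ->] large].
by rewrite mass_setX_sub_prod fmorphV /= ratr_nat discrepancy_ge_dTV //; lia.
Qed.
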